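(* Let $G$ be the $n$-cycle graph and let $\sigma$ be a $d$-dimensional signature on $G$. Then there exist $d_1,d_{-1}\in\mathbb{N}$ and $\theta_1,\dots,\theta_k\in(0,\pi)\cup(\pi,2\pi)$ with $d_1+d_{-1}+2k=d$ such that $$\sigma\cong\Big(\bigoplus_{i=1}^{d_1}\iota^1\Big)\oplus\Big(\bigoplus_{i=1}^{d_{-1}}\iota^{-1}\Big)\oplus\sigma^{\theta_1}\oplus\cdots\oplus\sigma^{\theta_k}.$$
   Context: The $n$-cycle graph has vertices $1,\dots,n$ and edges $\{i,i+1\}$ for $i=1,\dots,n$ (indices mod $n$), with positive weights. A $d$-dimensional signature is a map $\sigma$ from oriented edges to $\mathsf{O}(d)$ with $\sigma_{ji}=\sigma_{ij}^{\mathrm T}$. Two $d$-dimensional signatures satisfy $\sigma\cong\tau$ if there is $f:V\to\mathsf{O}(d)$ with $f(i)\sigma_{ij}=\tau_{ij}f(j)$ for every oriented edge $(i,j)$. The direct sum of signatures is the edgewise block-diagonal sum $(\sigma\oplus\sigma')_{ij}=\sigma_{ij}\oplus\sigma'_{ij}$. $\iota^1$ is the $1$-dimensional signature identically $1$; $\iota^{-1}$ is the $1$-dimensional signature with value $-1$ on the oriented edges $(1,2),(2,1)$ and $+1$ elsewhere. For $\theta\in\mathbb{R}$, $\sigma^\theta$ is the $2$-dimensional signature with $\sigma^\theta_{12}=\begin{bmatrix}\cos\theta&-\sin\theta\\ \sin\theta&\cos\theta\end{bmatrix}$ and $\sigma^\theta_{i,i+1}=I_2$ for $i=2,\dots,n$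 (with $\sigma^\theta_{ji}=(\sigma^\theta_{ij})^{\mathrm T}$). $\mathbb{N}$ includes $0$. *)

From mathcomp Require Import all_boot all_order all_algebra.
From mathcomp Require Import reals trigo.
Set Implicit Arguments. Unset Strict Implicit. Unset Printing Implicit Defensive.
Import Order.TTheory GRing.Theory Num.Theory.
Local Open Scope ring_scope.

Section Signatures.
Variable R : realType.
Variable n : nat.

(* Vertices 1..n of the paper are 'I_n (vertex k of the paper is k-1 here).
   Oriented edges of the n-cycle: (i, i+1 mod n) and (i+1 mod n, i). *)
Definition cyc_edge (i j : 'I_n) : bool :=
  (val j == (val i).+1 %% n)%N || (val i == (val j).+1 %% n)%N.

Definition orthogonal (d : nat) (Q : 'M[R]_d) : Prop := Q *m Q^T = 1%:M.

(* A d-dimensional "pre-signature": a matrix for each ordered pair of vertices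
   (only values on oriented edges matter). *)
Definition sig (d : nat) := 'I_n -> 'I_n -> 'M[R]_d.

Definition is_signature (d : nat) (sigma : sig d) : Prop :=
  forall i j, cyc_edge i j -> orthogonal (sigma i j) /\ sigma j i = (sigma i j)^T.

Definition sig_equiv (d : nat) (sigma tau : sig d) : Prop :=
  exists f : 'I_n -> 'M[R]_d,
    (forall i, orthogonal (f i)) /\
    (forall i j, cyc_edge i j -> f i *m sigma i j = tau i j *m f j).

Definition sig_dsum (d1 d2 : nat) (s : sig d1) (t : sig d2) : sig (d1 + d2) :=
  fun i j => block_mx (s i j) 0 0 (t i j).

Definition sig_empty : sig 0 := fun _ _ => 1%:M.

Definition iota_p : sig 1 := fun _ _ => 1%:M.
(* iota^{-1}: -1 on the oriented edges (1,2),(2,1) of the paper, i.e. (0,1),(1,0). *)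
Definition iota_m : sig 1 := fun i j =>
  if ((val i == 0%N) && (val j == 1%N)) || ((val i == 1%N) && (val j == 0%N))
  then (-1)%:M else 1%:M.

Definition rot (th : R) : 'M[R]_2 :=
  \matrix_(a < 2, b < 2)
    (if (val a == 0%N) && (val b == 0%N) then cos th
     else if (val a == 0%N) then - sin th
     else if (val b == 0%N) then sin th else cos th).

Definition sig_rot (th : R) : sig 2 := fun i j =>
  if (val i == 0%N) && (val j == 1%N) then rot th
  else if (val i == 1%N) && (val j == 0%N) then (rot th)^T
  else 1%:M.

Fixpoint sig_pow (s : sig 1) (m : nat) : sig m :=
  match m return sig m with
  | 0 => sig_empty
  | m'.+1 => sig_dsum s (sig_pow s m')
  end.

Fixpoint sig_rots (l : seq R) : sig (size l * 2) :=
  match l return sig (size l * 2) with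
  | [::] => sig_empty
  | th :: l' => sig_dsum (sig_rot th) (sig_rots l')
  end.

Definition sig_normal_form (d1 dm : nat) (l : seq R) : sig (d1 + dm + size l * 2) :=
  sig_dsum (sig_dsum (sig_pow iota_p d1) (sig_pow iota_m dm)) (sig_rots l).

Definition sig_cast (d d' : nat) (e : d = d') (s : sig d) : sig d' :=
  fun i j => castmx (e, e) (s i j).

End Signatures.

From Pilot Require Import Defs.
From mathcomp Require Import all_boot all_order all_algebra.
From mathcomp Require Import reals trigo.
From mathcomp Require Import ring lra zify.
From mathcomp Require Import complex.
Import Order.TTheory GRing.Theory Num.Theory.
Set Implicit Arguments. Unset Strict Implicit. Unset Printing Implicit Defensive.
Local Open Scope ring_scope.

(* Switching along the path 1 -> 2 -> ... -> 0 around the cycle makes every edge matrix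
   the identity except the one on the edge (0,1), which becomes the holonomy H of the
   signature around the cycle, an orthogonal matrix; a further constant switching by an
   orthogonal P replaces H by P H P^T. By the real normal form of orthogonal matrices,
   obtained by repeatedly splitting off an invariant line or plane spanned by the real and
   imaginary parts of a complex eigenvector, P can be chosen so that P H P^T is block
   diagonal with blocks 1, -1 and rotations by angles in (0, pi) u (pi, 2 pi). That block
   matrix is exactly the value on (0,1) of the direct sum in the statement, which is the
   identity on every other edge. *)

Section OrthogonalSimilarity.
Variable R : fieldType.

(* [P] may be rectangular so that sizes that are equal but not convertible, such as
   [1 + (a + b)] and [1 + a + b], can be compared; see [orth_sim_size]. *)
Definition orth_sim m n (A : 'M[R]_m) (B : 'M[R]_n) :=
  exists P : 'M[R]_(n, m), [/\ P *m P^T = 1%:M, P^T *m P = 1%:M & P *m A = B *m P].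

Lemma orth_sim_refl m (A : 'M[R]_m) : orth_sim A A.
Proof. by exists 1%:M; rewrite trmx1 !mulmx1 mul1mx. Qed.

Lemma orth_sim_sym m n (A : 'M[R]_m) (B : 'M[R]_n) : orth_sim A B -> orth_sim B A.
Proof.
case=> P [PPt PtP PA]; exists P^T; rewrite trmxK; split=> //.
by rewrite -[A *m _]mul1mx -PtP -mulmxA (mulmxA P) PA -(mulmxA B) PPt mulmx1.
Qed.

Lemma orth_sim_trans m n p (A : 'M[R]_m) (B : 'M[R]_n) (C : 'M[R]_p) :
  orth_sim A B -> orth_sim B C -> orth_sim A C.
Proof.
case=> P [PPt PtP PA] [Q [QQt QtQ QB]]; exists (Q *m P); rewrite trmx_mul; split.
- by rewrite mulmxA -(mulmxA Q) PPt mulmx1 QQt.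
- by rewrite mulmxA -(mulmxA P^T) QtQ mulmx1 PtP.
- by rewrite -mulmxA PA !mulmxA QB.
Qed.

Lemma orth_sim_size m n (A : 'M[R]_m) (B : 'M[R]_n) : orth_sim A B -> m = n.
Proof.
case=> P [PPt PtP _]; apply/eqP; rewrite eqn_leq.
have := mxrankM_maxl P^T P; have := mxrankM_maxl P P^T.
rewrite PPt PtP !mxrank1 => /leq_trans-> //; last exact: rank_leq_col.
by move/leq_trans->; rewrite ?rank_leq_col.
Qed.

Lemma orth_sim_orthogonal m n (A : 'M[R]_m) (B : 'M[R]_n) :
  orth_sim A B -> A *m A^T = 1%:M -> B *m B^T = 1%:M.
Proof.
case=> P [PPt PtP PA] AAt.
have -> : B = P *m A *m P^T by rewrite PA -mulmxA PPt mulmx1.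
by rewrite !trmx_mul trmxK !mulmxA -(mulmxA _ P^T) PtP mulmx1 -(mulmxA _ A) AAt mulmx1.
Qed.

Lemma orth_sim_block m1 m2 n1 n2 (A : 'M[R]_m1) (A' : 'M[R]_n1)
    (B : 'M[R]_m2) (B' : 'M[R]_n2) :
  orth_sim A A' -> orth_sim B B' -> orth_sim (block_mx A 0 0 B) (block_mx A' 0 0 B').
Proof.
case=> P [PPt PtP PA] [Q [QQt QtQ QB]]; exists (block_mx P 0 0 Q).
rewrite tr_block_mx !trmx0 !mulmx_block !mulmx0 !mul0mx !addr0 !add0r.
by rewrite PPt PtP QQt QtQ PA QB -!scalar_mx_block.
Qed.

Lemma orth_sim_blockr m n1 n2 (A : 'M[R]_m) (B : 'M[R]_n1) (C : 'M[R]_n2) :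
  orth_sim B C -> orth_sim (block_mx A 0 0 B) (block_mx A 0 0 C).
Proof. exact/orth_sim_block/orth_sim_refl. Qed.

Lemma orthogonal_block_diag m n (A : 'M[R]_m) (B : 'M[R]_n) :
  A *m A^T = 1%:M -> B *m B^T = 1%:M -> block_mx A 0 0 B *m (block_mx A 0 0 B)^T = 1%:M.
Proof.
move=> AAt BBt; rewrite tr_block_mx !trmx0 mulmx_block !mulmx0 !mul0mx !addr0 !add0r.
by rewrite AAt BBt -scalar_mx_block.
Qed.

Lemma orth_sim_block_swap m n (A : 'M[R]_m) (B : 'M[R]_n) :
  orth_sim (block_mx A 0 0 B) (block_mx B 0 0 A).
Proof.
exists (block_mx 0 1%:M 1%:M 0).
rewrite tr_block_mx !trmx0 !trmx1 !mulmx_block !mulmx0 !mul0mx !addr0 !add0r.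
by rewrite !mulmx1 !mul1mx -!scalar_mx_block.
Qed.

Lemma orth_sim_castmx m n (e : m = n) (A : 'M[R]_m) : orth_sim A (castmx (e, e) A).
Proof. by case: n / e; rewrite castmx_id; apply: orth_sim_refl. Qed.

Lemma orth_sim_blockA m1 m2 m3 (A : 'M[R]_m1) (B : 'M[R]_m2) (C : 'M[R]_m3) :
  orth_sim (block_mx (block_mx A 0 0 B) 0 0 C) (block_mx A 0 0 (block_mx B 0 0 C)).
Proof.
have := block_mxAx A 0 0 0 B 0 0 0 C; rewrite /= !row_mx0 !col_mx0 => ->.
exact: orth_sim_castmx.
Qed.

Lemma orthogonal_lower_block k m (A : 'M[R]_k) (C : 'M[R]_(m, k)) (D : 'M[R]_m) :
  block_mx A 0 C D *m (block_mx A 0 C D)^T = 1%:M ->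
  [/\ C = 0, A *m A^T = 1%:M & D *m D^T = 1%:M].
Proof.
rewrite tr_block_mx trmx0 mulmx_block !mulmx0 !mul0mx !addr0.
rewrite [1%:M]scalar_mx_block => /eq_block_mx [AAt ACt _ DDt].
have C0 : C = 0.
  apply: trmx_inj; rewrite trmx0 -[C^T]mul1mx -(mulmx1C AAt) -mulmxA ACt mulmx0 //.
by move: DDt; rewrite C0 mul0mx add0r.
Qed.

Lemma trmx_intertwine d (fu fw s t : 'M[R]_d) :
  s *m s^T = 1%:M -> t *m t^T = 1%:M -> fu *m s = t *m fw -> fw *m s^T = t^T *m fu.
Proof.
move=> sst ttt fus.
by rewrite -[fw]mul1mx -(mulmx1C ttt) -(mulmxA t^T) -fus -!mulmxA sst mulmx1.
Qed.

End OrthogonalSimilarity.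

Section OrthonormalRows.
Variable R : rcfType.

Lemma row_norm_gt0 n (w : 'rV[R]_n) : w != 0 -> 0 < (w *m w^T) 0 0.
Proof.
move=> w0; have -> : (w *m w^T) 0 0 = \sum_j w 0 j ^+ 2.
  by rewrite mxE; apply: eq_bigr => j _; rewrite mxE expr2.
rewrite lt_def sumr_ge0 ?andbT => [|j _]; last exact: sqr_ge0.
apply: contra w0 => /eqP /psumr_eq0P w2; apply/eqP/rowP => j; rewrite mxE.
by apply/eqP; rewrite -sqrf_eq0; apply/eqP/w2 => // k _; apply: sqr_ge0.
Qed.

Lemma normalize_row n (w : 'rV[R]_n) : w != 0 ->
  exists2 x : 'rV[R]_n, x *m x^T = 1%:M & (x :=: w)%MS.
Proof.
move=> w0; set s := (w *m w^T) 0 0; have s_gt0 : 0 < s := row_norm_gt0 w0.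
have c0 : (Num.sqrt s)^-1 != 0 by rewrite invr_eq0 gt_eqF ?sqrtr_gt0.
exists ((Num.sqrt s)^-1 *: w); last exact: eqmx_scale.
rewrite linearZ /= -scalemxAl -scalemxAr scalerA [w *m _]mx11_scalar -/s.
by rewrite scale_scalar_mx -expr2 exprVn sqr_sqrtr ?ltW // mulVf ?gt_eqF.
Qed.

(* The reflection in the hyperplane orthogonal to [u - e], [e] the first basis vector. *)
Lemma householder n (u : 'rV[R]_(1 + n)) : u *m u^T = 1%:M ->
  exists2 H : 'M[R]_(1 + n), H *m H^T = 1%:M & u *m H = pid_mx 1.
Proof.
move=> uut; set e : 'rV[R]_(1 + n) := pid_mx 1.
have eet : e *m e^T = 1%:M by rewrite tr_pid_mx pid_mx_id ?pid_mx_1.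
have [<-|ue] := eqVneq u e; first by exists 1%:M; rewrite ?trmx1 mulmx1.
set v := u - e; set c := (u *m e^T) 0 0.
have uet : u *m e^T = c%:M by exact: mx11_scalar.
have eut : e *m u^T = c%:M by rewrite -[c%:M]tr_scalar_mx -uet trmx_mul trmxK.
set s := 2 - 2 * c.
have vvt : v *m v^T = s%:M.
  rewrite /v linearB /= mulmxBl !mulmxBr uut uet eut eet.
  by rewrite -!raddfB /s; congr (_%:M); ring.
have uvt : u *m v^T = (s / 2)%:M.
  rewrite /v linearB /= mulmxBr uut uet.
  by rewrite -raddfB /s; congr (_%:M); field.
have s0 : s != 0.
  have v0 : v != 0 by rewrite subr_eq0.
  by have := row_norm_gt0 v0; rewrite vvt mxE eqxx mulr1n => /lt0r_neq0.
set V := v^T *m v.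
have VVt : V^T = V by rewrite /V trmx_mul trmxK.
have VV : V *m V = s *: V by rewrite /V mulmxA -(mulmxA v^T) vvt mul_mx_scalar -scalemxAl.
set H := 1%:M - (2 / s) *: V.
have Ht : H^T = H by rewrite /H linearB /= linearZ /= trmx1 VVt.
exists H.
  rewrite Ht /H mulmxBl !mulmxBr mul1mx mulmx1 -!scalemxAl -!scalemxAr VV !scalerA.
  rewrite mul1mx -scalerBl -addrA -opprD -scalerDl.
  have -> : 2 / s + (2 / s - 2 / s * (2 / s) * s) = 0 by field.
  by rewrite scale0r subr0.
rewrite mulmxBr mulmx1 -scalemxAr mulmxA uvt mul_scalar_mx scalerA.
have -> : 2 / s * (s / 2) = 1 by field.
by rewrite scale1r /v opprB addrC subrK.
Qed.

Lemma pid_mx_colS k m :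
  pid_mx (1 + k) = col_mx (pid_mx 1) (row_mx 0 (pid_mx k)) :> 'M[R]_(1 + k, 1 + (k + m)).
Proof.
apply/matrixP => i j; rewrite !mxE; case: splitP => i' ->; rewrite !mxE.
  by rewrite (ord1 i').
by case: splitP => j' ->; rewrite !mxE ?(ord1 j').
Qed.

Lemma orthonormal_completion k m (X : 'M[R]_(k, k + m)) : X *m X^T = 1%:M ->
  exists2 Q : 'M[R]_(k + m), Q *m Q^T = 1%:M & X *m Q = pid_mx k.
Proof.
elim: k X => [|k IH]; first by exists 1%:M; rewrite ?trmx1 mulmx1 // !flatmx0.
change (forall X : 'M[R]_(1 + k, 1 + (k + m)), X *m X^T = 1%:M ->
  exists2 Q : 'M[R]_(1 + (k + m)), Q *m Q^T = 1%:M & X *m Q = pid_mx (1 + k)).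
move=> X; rewrite -[X]vsubmxK; set x := usubmx X; set Y := dsubmx X.
rewrite tr_col_mx mul_col_row [1%:M]scalar_mx_block => /eq_block_mx [xxt _ Yxt YYt].
have [H1 HHt1 xH1] := householder xxt.
set Y1 : 'M_(k, 1 + (k + m)) := Y *m H1.
have Y1l : lsubmx Y1 = 0.
  have : Y1 *m (x *m H1)^T = 0 by rewrite trmx_mul mulmxA -(mulmxA Y) HHt1 mulmx1.
  rewrite xH1 tr_pid_mx (pid_mx_col _ (k + m) 1) -[Y1]hsubmxK mul_row_col.
  by rewrite mulmx0 addr0 mulmx1 row_mxKl.
have Y1E : Y1 = row_mx 0 (rsubmx Y1) by rewrite -{1}[Y1]hsubmxK Y1l.
set Z := rsubmx Y1 in Y1E.
have [Q2 QQt2 ZQ2] : exists2 Q2 : 'M[R]_(k + m), Q2 *m Q2^T = 1%:M & Z *m Q2 = pid_mx k.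
  apply: IH; have : Y1 *m Y1^T = 1%:M by rewrite trmx_mul mulmxA -(mulmxA Y) HHt1 mulmx1.
  by rewrite Y1E tr_row_mx mul_row_col trmx0 mulmx0 add0r.
exists (H1 *m (block_mx 1%:M 0 0 Q2 : 'M_(1 + (k + m)))).

  rewrite trmx_mul tr_block_mx !trmx0 trmx1 mulmxA -(mulmxA H1) mulmx_block.
  by rewrite !mulmx0 !mul0mx !addr0 !add0r mulmx1 QQt2 -scalar_mx_block mulmx1.
rewrite mul_col_mx !mulmxA xH1 -/Y1 Y1E (pid_mx_row _ (k + m) 1) !mul_row_block.
by rewrite !mulmx0 !mul0mx !mulmx1 !addr0 !add0r ZQ2 -pid_mx_row pid_mx_colS.
Qed.

Lemma orth_sim_split k m (M : 'M[R]_(k + m)) (X : 'M[R]_(k, k + m)) :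
  M *m M^T = 1%:M -> X *m X^T = 1%:M -> stablemx X M ->
  exists (A : 'M[R]_k) (B : 'M[R]_m),
    [/\ A *m A^T = 1%:M, B *m B^T = 1%:M & orth_sim M (block_mx A 0 0 B)].
Proof.
move=> MMt XXt /submxP [D XM].
have [Q QQt XQ] := orthonormal_completion XXt.
set N := Q^T *m M *m Q.
have MN : orth_sim M N.
  exists Q^T; rewrite trmxK; split; first exact: mulmx1C.
    exact: QQt.
  by rewrite /N -(mulmxA _ Q) QQt mulmx1.
have Nur : ursubmx N = 0.
  have : pid_mx k *m N = D *m pid_mx k.
    by rewrite /N !mulmxA -XQ -(mulmxA X Q) QQt mulmx1 XM -mulmxA XQ.
  rewrite (pid_mx_row _ m k) -{1}[N]vsubmxK mul_row_col mul0mx addr0 mul1mx.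
  by rewrite mul_mx_row mulmx0 => /(congr1 rsubmx); rewrite row_mxKr.
have := orth_sim_orthogonal MN MMt.
rewrite -(submxK N) Nur in MN * => /orthogonal_lower_block [dl0 AAt BBt].
by exists (ulsubmx N), (drsubmx N); rewrite -dl0.
Qed.

Lemma orthonormal_span2 n (a b : 'rV[R]_n) : a != 0 ->
  (exists2 x : 'rV[R]_n, x *m x^T = 1%:M & (x :=: col_mx a b)%MS) \/
  (exists2 X : 'M[R]_(1 + 1, n), X *m X^T = 1%:M & (X :=: col_mx a b)%MS).
Proof.
move=> a0; set T := col_mx a b.
have /andP [aT bT] : (a <= T)%MS && (b <= T)%MS by rewrite -col_mx_sub submx_refl.
have [x xxt /eqmxP /andP [xa ax]] := normalize_row a0.
have xT : (x <= T)%MS := submx_trans xa aT.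
set t := (b *m x^T) 0 0; set z := b - t *: x.
have zT : (z <= T)%MS by rewrite addmx_sub ?eqmx_opp ?scalemx_sub.
have bzx : b = z + t *: x by rewrite subrK.
have [z0|z_neq0] := eqVneq z 0.
  left; exists x => //; apply/eqmxP; rewrite xT col_mx_sub ax bzx z0 add0r.
  by rewrite scalemx_sub.
have [y yyt /eqmxP /andP [yz zy]] := normalize_row z_neq0.
have zxt : z *m x^T = 0.
  by rewrite mulmxBl -scalemxAl xxt [b *m _]mx11_scalar scalemx1 subrr.
have yxt : y *m x^T = 0.
  by case/submxP: yz => D ->; rewrite -mulmxA zxt mulmx0.
right; exists (col_mx x y).
  rewrite tr_col_mx mul_col_row xxt yyt yxt -[x *m y^T]trmxK trmx_mul trmxK yxt trmx0.
  by rewrite -scalar_mx_block.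
have /andP [xX yX] : (x <= col_mx x y)%MS && (y <= col_mx x y)%MS.
  by rewrite -col_mx_sub submx_refl.
apply/eqmxP; rewrite !col_mx_sub xT (submx_trans yz zT) (submx_trans ax xX) bzx.
by rewrite addmx_sub ?scalemx_sub // (submx_trans zy yX).
Qed.

Lemma real_rotation_pair d (M : 'M[R]_d.+1) : exists (a b : 'rV[R]_d.+1) (al be : R),
  [/\ a != 0, a *m M = al *: a - be *: b & b *m M = be *: a + al *: b].
Proof.
suff [a [b [al [be [ab0 aM bM]]]]] : exists (a b : 'rV[R]_d.+1) (al be : R),
    [/\ (a != 0) || (b != 0), a *m M = al *: a - be *: b & b *m M = be *: a + al *: b].
  have [a0|] := eqVneq a 0; last by exists a, b, al, be.
  rewrite a0 eqxx /= in ab0; exists b, a, al, (- be).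
  by rewrite ab0 bM aM a0 !scaler0 add0r subr0 sub0r addr0 scaleNr.
set MC := map_mx (real_complex R) M.
have [la /eigenvalueP [v vMC v0]] := eigenvalue_closed MC (ltn0Sn d).
exists (map_mx (@complex.Re R) v), (map_mx (@complex.Im R) v).
exists (complex.Re la), (complex.Im la); split.
- apply: contraNT v0; rewrite negb_or !negbK => /andP [/eqP ReV /eqP ImV].
  apply/eqP/rowP => j; move/rowP/(_ j): ReV; move/rowP/(_ j): ImV.
  by rewrite !mxE; case: (v 0 j) => x y /= -> ->.
- apply/rowP => j; move/rowP/(_ j): vMC; rewrite !mxE => /(congr1 (@complex.Re R)).
  rewrite raddf_sum; case: la (v 0 j) => [p q] [x y] /= <-.
  by apply: eq_bigr => k _; rewrite !mxE; case: (v 0 k) => x' y' /=; rewrite mulr0 subr0.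
- apply/rowP => j; move/rowP/(_ j): vMC; rewrite !mxE => /(congr1 (@complex.Im R)).
  rewrite raddf_sum; case: la (v 0 j) => [p q] [x y] /=; rewrite addrC => <-.
  by apply: eq_bigr => k _; rewrite !mxE; case: (v 0 k) => x' y' /=; rewrite mulr0 add0r.
Qed.

Lemma orth_sim_split_small d (M : 'M[R]_d.+1) : M *m M^T = 1%:M ->
  exists k d' (A : 'M[R]_k) (B : 'M[R]_d'),
    [/\ (0 < k <= 2)%N, A *m A^T = 1%:M, B *m B^T = 1%:M & orth_sim M (block_mx A 0 0 B)].
Proof.
move=> MMt; have [a [b [al [be [a0 aM bM]]]]] := real_rotation_pair M.
have stabT : stablemx (col_mx a b) M.
  have /andP [aT bT] : (a <= col_mx a b)%MS && (b <= col_mx a b)%MS.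
    by rewrite -col_mx_sub submx_refl.
  by rewrite mul_col_mx aM bM col_mx_sub !addmx_sub ?eqmx_opp ?scalemx_sub.
have [[x xxt xT] | [X XXt XT]] := orthonormal_span2 b a0.
  have [|A [B [AAt BBt MAB]]] := @orth_sim_split 1 d M x MMt xxt.
    by rewrite (eqmx_stable M xT).
  by exists 1%N, d, A, B.
(* two orthonormal rows need at least two columns *)
have := mxrankM_maxl X X^T; rewrite XXt mxrank1 => /leq_trans/(_ (rank_leq_col X)).
clear aM bM a0; case: d => [//|d'] in M a b MMt X XXt XT stabT *.
have [|A [B [AAt BBt MAB]]] := @orth_sim_split 2 d' M X MMt XXt.
  by rewrite (eqmx_stable M XT).
by exists 2%N, d', A, B.
Qed.

End OrthonormalRows.

Section NormalForm.
Variable R : realType.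

Definition proper_angle (th : R) := (0 < th < pi) || (pi < th < 2 * pi).

Lemma exists_proper_angle (c s : R) : c ^+ 2 + s ^+ 2 = 1 -> s != 0 ->
  exists2 th, proper_angle th & cos th = c /\ sin th = s.
Proof.
move=> cs1 s0; have s2_gt0 : 0 < s ^+ 2 by rewrite exprn_even_gt0.
have /andP [c_gtN1 c_lt1] : -1 < c < 1 by apply/andP; split; nra.
set ph := acos c.
have cos_ph : cos ph = c by rewrite acosK // in_itv /= !ltW.
have sin_ph : sin ph = `|s|.
  rewrite sin_acos ?(ltW c_gtN1) ?(ltW c_lt1) //.
  by rewrite (_ : 1 - c ^+ 2 = s ^+ 2) ?sqrtr_sqr; lra.
have ph_gt0 : 0 < ph by apply: acos_gt0; rewrite (ltW c_gtN1) c_lt1.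
have ph_ltpi : ph < pi by apply: acos_ltpi; rewrite c_gtN1 (ltW c_lt1).
have [s_gt0|s_le0] := ltP 0 s.
  by exists ph; rewrite /proper_angle ?ph_gt0 ?ph_ltpi ?sin_ph ?gtr0_norm.
exists (- ph + pi *+ 2); last by rewrite cosD2pi sinD2pi cosN sinN sin_ph ler0_norm ?opprK.
by apply/orP; right; rewrite -mulr_natl; apply/andP; split; lra.
Qed.

Lemma ord2E (i : 'I_2) : i = ord0 \/ i = ord_max.
Proof. by case: i => [[|[|//]] i2]; [left|right]; apply: val_inj. Qed.

Lemma mulmx2E m p (A : 'M[R]_(m, 2)) (B : 'M[R]_(2, p)) i j :
  (A *m B) i j = A i ord0 * B ord0 j + A i ord_max * B ord_max j.
Proof.
by rewrite mxE big_ord_recl big_ord1 (_ : lift ord0 ord0 = ord_max) //; apply: val_inj.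
Qed.

Lemma orthogonal2_rot_or_stable (A : 'M[R]_2) : A *m A^T = 1%:M ->
  (exists2 th, proper_angle th & A = Defs.rot th) \/
  (exists2 v : 'rV[R]_2, v != 0 & stablemx v A).
Proof.
move=> AAt; have AtA := mulmx1C AAt.
set p := A ord0 ord0; set q := A ord0 ord_max.
set r := A ord_max ord0; set s := A ord_max ord_max.
have pq1 : p * p + q * q = 1 by move/matrixP/(_ ord0 ord0): AAt; rewrite mulmx2E !mxE.
have prqs : p * r + q * s = 0 by move/matrixP/(_ ord0 ord_max): AAt; rewrite mulmx2E !mxE.
have pr1 : p * p + r * r = 1 by move/matrixP/(_ ord0 ord0): AtA; rewrite mulmx2E !mxE.
have pqrs : p * q + r * s = 0 by move/matrixP/(_ ord0 ord_max): AtA; rewrite mulmx2E !mxE.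
pose row2 x y : 'rV[R]_2 := \row_(j < 2) [:: x; y]`_j.
have row2_neq0 x y : x != 0 -> row2 x y != 0.
  by apply: contraNneq => /rowP/(_ ord0); rewrite !mxE /= => ->.
have [q0|q_neq0] := eqVneq q 0.
  right; exists (row2 1 0); first exact/row2_neq0/oner_neq0.
  have -> : row2 1 0 *m A = p *: row2 1 0.
    by apply/rowP => j; case: (ord2E j) => ->; rewrite mulmx2E !mxE /= -/p -/q ?q0; lra.
  exact/scalemx_sub/submx_refl.
have r_pmq : r = q \/ r = - q.
  have : (r - q) * (r + q) = 0 by nra.
  by move/eqP; rewrite mulf_eq0 subr_eq0 addr_eq0 => /orP [] /eqP; [left|right].
case: r_pmq => [r_q|r_Nq].
  have s_Np : s = - p.
    have : q * (s + p) = 0 by rewrite r_q in pqrs; nra.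
    by move/eqP; rewrite mulf_eq0 (negbTE q_neq0) addr_eq0 => /eqP.
  (* a reflection, which fixes (q, 1 - p) *)
  right; exists (row2 q (1 - p)); first exact: row2_neq0.
  rewrite (_ : row2 q (1 - p) *m A = row2 q (1 - p)) ?submx_refl //.
  apply/rowP => j; case: (ord2E j) => ->; rewrite mulmx2E !mxE /= -/p -/q -/r -/s.
    by rewrite r_q; ring.
  by rewrite s_Np; nra.
have s_p : s = p.
  have : q * (s - p) = 0 by rewrite r_Nq in prqs; nra.
  by move/eqP; rewrite mulf_eq0 (negbTE q_neq0) subr_eq0 => /eqP.
have pq1' : p ^+ 2 + (- q) ^+ 2 = 1 by rewrite sqrrN !expr2.
have Nq_neq0 : - q != 0 by rewrite oppr_eq0.
have [th th_proper [cos_th sin_th]] := exists_proper_angle pq1' Nq_neq0.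
left; exists th => //; apply/matrixP => i j.
by case: (ord2E i) => ->; case: (ord2E j) => ->;
  rewrite !mxE /= -/p -/q -/r -/s ?r_Nq ?s_p ?cos_th ?sin_th ?opprK.
Qed.

Fixpoint rots_mx (l : seq R) : 'M[R]_(size l * 2) :=
  match l return 'M[R]_(size l * 2) with
  | [::] => 1%:M
  | th :: l' => block_mx (Defs.rot th) 0 0 (rots_mx l')
  end.

Definition normal_form_mx d1 dm (l : seq R) : 'M[R]_(d1 + dm + size l * 2) :=
  block_mx (block_mx 1%:M 0 0 (-1)%:M) 0 0 (rots_mx l).

Definition has_normal_form d (M : 'M[R]_d) :=
  exists d1 dm l, all proper_angle l /\ orth_sim M (normal_form_mx d1 dm l).

Lemma rot_orthogonal (th : R) : Defs.rot th *m (Defs.rot th)^T = 1%:M.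
Proof.
apply/matrixP => i j; have := cos2Dsin2 th; rewrite mulmx2E !mxE.
by case: (ord2E i) => ->; case: (ord2E j) => ->; rewrite /= ?mxE /=; nra.
Qed.

Lemma normal_form_orthogonal d1 dm l :
  normal_form_mx d1 dm l *m (normal_form_mx d1 dm l)^T = 1%:M.
Proof.
have rots_orth : forall l, rots_mx l *m (rots_mx l)^T = 1%:M.
  elim=> [|th l' IH] /=; first by rewrite trmx1 mulmx1.
  exact: orthogonal_block_diag (rot_orthogonal th) IH.
apply: orthogonal_block_diag (rots_orth l).
by apply: orthogonal_block_diag; rewrite tr_scalar_mx -scalar_mxM ?mulr1 ?mulrNN ?mulr1.
Qed.

Lemma has_normal_form_orth_sim m n (M : 'M[R]_m) (N : 'M[R]_n) :
  orth_sim M N -> has_normal_form N -> has_normal_form M.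
Proof.
move=> MN [d1 [dm [l [l_proper NF]]]].
by exists d1, dm, l; split; last exact: orth_sim_trans NF.
Qed.

Lemma has_normal_form_block_sign m (B : 'M[R]_m) (a : 'M[R]_1) :
  a *m a^T = 1%:M -> has_normal_form B -> has_normal_form (block_mx a 0 0 B).
Proof.
move=> aat [d1 [dm [l [l_proper BN]]]].
apply: has_normal_form_orth_sim (orth_sim_blockr _ BN) _.
apply: has_normal_form_orth_sim (orth_sim_sym (orth_sim_blockA _ _ _)) _.
have a2 : a 0 0 ^+ 2 = 1 by move/rowP/(_ 0): aat; rewrite !mxE big_ord1 !mxE expr2.
rewrite [a]mx11_scalar; move/eqP: a2; rewrite sqrf_eq1 => /orP [] /eqP ->.
  exists (1 + d1)%N, dm, l; split=> //; apply: orth_sim_block (orth_sim_refl _).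
  apply: orth_sim_trans (orth_sim_sym (orth_sim_blockA _ _ _)) _.
  by rewrite -scalar_mx_block; apply: orth_sim_refl.
exists d1, (dm + 1)%N, l; split=> //; apply: orth_sim_block (orth_sim_refl _).
apply: orth_sim_trans (orth_sim_block_swap _ _) _.
apply: orth_sim_trans (orth_sim_blockA _ _ _) _.
by rewrite -scalar_mx_block; apply: orth_sim_refl.
Qed.

Lemma has_normal_form_block_rot m (B : 'M[R]_m) th :
  proper_angle th -> has_normal_form B -> has_normal_form (block_mx (Defs.rot th) 0 0 B).
Proof.
move=> th_proper [d1 [dm [l [l_proper BN]]]].
exists d1, dm, (th :: l); split; first by rewrite /= th_proper.
apply: orth_sim_trans (orth_sim_blockr _ BN) _.
apply: orth_sim_trans (orth_sim_sym (orth_sim_blockA _ _ _)) _.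
apply: orth_sim_trans (orth_sim_block (orth_sim_block_swap _ _) (orth_sim_refl _)) _.
exact: orth_sim_blockA.
Qed.

Lemma has_normal_form_block2 m (B : 'M[R]_m) (A : 'M[R]_2) :
  A *m A^T = 1%:M -> has_normal_form B -> has_normal_form (block_mx A 0 0 B).
Proof.
move=> AAt BN; have [[th th_proper ->]|[v v0 stab_v]] := orthogonal2_rot_or_stable AAt.
  exact: has_normal_form_block_rot.
have [x xxt xv] := normalize_row v0.
have [|a [b [aat bbt Aab]]] := @orth_sim_split _ 1 1 A x AAt xxt.
  by rewrite (eqmx_stable A xv).
apply: has_normal_form_orth_sim (orth_sim_block Aab (orth_sim_refl B)) _.
apply: has_normal_form_orth_sim (orth_sim_blockA _ _ _) _.
by apply: has_normal_form_block_sign => //; apply: has_normal_form_block_sign.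
Qed.

Lemma orthogonal_has_normal_form d (M : 'M[R]_d) : M *m M^T = 1%:M -> has_normal_form M.
Proof.
elim/ltn_ind: d M => -[_ M _|d IH M MMt].
  by exists 0%N, 0%N, [::]; split => //; exists 1%:M; split; apply/matrixP => -[].
have [k [d' [A [B [/andP [k_gt0 k_le2] AAt BBt MAB]]]]] := orth_sim_split_small MMt.
have d'_lt : (d' < d.+1)%N by have := orth_sim_size MAB; lia.
apply: has_normal_form_orth_sim MAB _.
case: k k_gt0 k_le2 A AAt => [|[|[|//]]] // _ _ A AAt.
  exact: has_normal_form_block_sign (IH _ d'_lt B BBt).
exact: has_normal_form_block2 (IH _ d'_lt B BBt).
Qed.

End NormalForm.

Section NormalFormSignature.
Variables (R : realType) (n : nat).

Definition on_edge01 (i j : 'I_n) :=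
  ((val i == 0%N) && (val j == 1%N)) || ((val i == 1%N) && (val j == 0%N)).

Lemma sig_pow_iota_p m i j : sig_pow (@iota_p R n) m i j = 1%:M.
Proof. by elim: m => //= m IH; rewrite /sig_dsum IH -scalar_mx_block. Qed.

Lemma sig_pow_iota_m m i j :
  sig_pow (@iota_m R n) m i j = (if on_edge01 i j then -1 else 1)%:M.
Proof.
elim: m => [|m IH] /=; first by apply/matrixP => -[].
rewrite /sig_dsum IH /iota_m -/(on_edge01 i j).
by case: on_edge01; rewrite -scalar_mx_block.
Qed.

Lemma sig_rotsE (l : seq R) (i j : 'I_n) :
  sig_rots l i j = if (val i == 0%N) && (val j == 1%N) then rots_mx l
                   else if (val i == 1%N) && (val j == 0%N) then (rots_mx l)^T else 1%:M.
Proof.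
elim: l => /= [|th l IH]; first by rewrite trmx1; case: ifP => //; case: ifP.
rewrite /sig_dsum IH /sig_rot (tr_block_mx (Defs.rot th)) !trmx0.
by case: (val i == 0%N) (val i == 1%N) (val j == 0%N) (val j == 1%N) => [] [] [] [];
  rewrite /= -?scalar_mx_block.
Qed.

Lemma sig_normal_formE d1 dm (l : seq R) (i j : 'I_n) :
  sig_normal_form d1 dm l i j =
  if (val i == 0%N) && (val j == 1%N) then normal_form_mx d1 dm l
  else if (val i == 1%N) && (val j == 0%N) then (normal_form_mx d1 dm l)^T else 1%:M.
Proof.
rewrite /sig_normal_form /sig_dsum sig_pow_iota_p sig_pow_iota_m sig_rotsE /on_edge01.
rewrite /normal_form_mx !tr_block_mx !trmx0 trmx1 tr_scalar_mx.
by case: (val i == 0%N) (val i == 1%N) (val j == 0%N) (val j == 1%N) => [] [] [] [];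
  rewrite /= -?scalar_mx_block.
Qed.

Lemma sig_normal_form_signature d1 dm (l : seq R) :
  is_signature (sig_normal_form (n:=n) d1 dm l).
Proof.
have NFt := mulmx1C (normal_form_orthogonal d1 dm l).
move=> [i hi] [j hj] _; rewrite /Defs.orthogonal !sig_normal_formE /=.
by case: i j hi hj => [|[|i]] [|[|j]] _ _ //=;
  rewrite ?trmxK ?trmx1 ?mulmx1 ?normal_form_orthogonal.
Qed.

End NormalFormSignature.

Section Switching.
Variables (R : realType) (n d : nat) (sigma : sig R n.+1 d).
Hypothesis sigma_sig : is_signature sigma.

Lemma cyc_edgeS (i : 'I_n.+1) : cyc_edge i (ordS i).
Proof. by rewrite /cyc_edge eqxx. Qed.

Lemma cyc_edgeP (i j : 'I_n.+1) : cyc_edge i j -> j = ordS i \/ i = ordS j.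
Proof. by case/orP => /eqP e; [left|right]; apply: val_inj. Qed.

(* [transport k] is the product of the edge matrices along the path from vertex 1 to
   vertex k+1 (mod n+1). *)
Fixpoint transport k : 'M[R]_d :=
  if k is k'.+1 then transport k' *m sigma (inord k) (ordS (inord k)) else 1%:M.

Definition holonomy := transport n *m sigma ord0 (ordS ord0).

Lemma transport_orthogonal k : transport k *m (transport k)^T = 1%:M.
Proof.
elim: k => [|k IH] /=; first by rewrite trmx1 mulmx1.
have [edge_orth _] := sigma_sig (cyc_edgeS (inord k.+1)).
by rewrite trmx_mul mulmxA -(mulmxA (transport k)) edge_orth mulmx1 IH.
Qed.

Lemma holonomy_orthogonal : holonomy *m holonomy^T = 1%:M.
Proof.
have [edge_orth _] := sigma_sig (cyc_edgeS ord0).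
by rewrite trmx_mul mulmxA -(mulmxA (transport n)) edge_orth mulmx1 transport_orthogonal.
Qed.

Lemma sig_equiv_holonomy (tau : sig R n.+1 d) (P : 'M[R]_d) :
  is_signature tau -> P *m P^T = 1%:M ->
  tau ord0 (ordS ord0) *m P = P *m holonomy ->
  (forall u, val u != 0%N -> tau u (ordS u) = 1%:M) -> sig_equiv sigma tau.
Proof.
move=> tau_sig PPt tau01 tau_off.
pose f (v : 'I_n.+1) := P *m transport (ord_pred v).
have f_orth v : f v *m (f v)^T = 1%:M.
  by rewrite trmx_mul mulmxA -(mulmxA P) transport_orthogonal mulmx1.
have f_edge u : f u *m sigma u (ordS u) = tau u (ordS u) *m f (ordS u).
  rewrite /f ordSK; have [u0|u_neq0] := eqVneq (val u) 0%N.
    have -> : u = ord0 by apply: val_inj.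
    rewrite /= mulmx1 tau01 /holonomy -mulmxA; congr (P *m (transport _ *m _)).
    by rewrite /= modn_small.
  rewrite tau_off // mul1mx -mulmxA; congr (P *m _).
  case: u u_neq0 => [[//|k] k_lt] _.
  have -> : nat_of_ord (ord_pred (Ordinal k_lt)) = k.
    by rewrite /= modnDr modn_small // ltnW.
  by rewrite /= (_ : inord k.+1 = Ordinal k_lt) //; apply: val_inj; rewrite /= inordK.
exists f; split; first exact: f_orth.
move=> i j /cyc_edgeP [->|->]; first exact: f_edge.
have [s_orth s_tr] := sigma_sig (cyc_edgeS j).
have [t_orth t_tr] := tau_sig _ _ (cyc_edgeS j).
by rewrite s_tr t_tr; apply: trmx_intertwine (f_edge j).
Qed.

End Switching.

Theorem proposition2p11 (R : realType) (n d : nat) (hn : (3 <= n)%N)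
  (sigma : sig R n d) (hsigma : is_signature sigma) :
  exists (d1 dm : nat) (l : seq R),
    (forall th, th \in l -> (0 < th < pi) || (pi < th < 2 * pi)) /\
    exists e : (d1 + dm + size l * 2 = d)%N,
      sig_equiv sigma (sig_cast e (@sig_normal_form R n d1 dm l)).
Proof.
case: n hn sigma hsigma => [//|n] hn sigma hsigma.
have [d1 [dm [l [l_proper HN]]]] := orthogonal_has_normal_form (holonomy_orthogonal hsigma).
exists d1, dm, l; split; first exact/allP.
have [P [PPt _ PH]] := HN; have d_eq := orth_sim_size HN; subst d; exists erefl.
change (sig_equiv sigma (sig_normal_form d1 dm l)).
apply: (sig_equiv_holonomy hsigma (@sig_normal_form_signature R n.+1 d1 dm l) PPt).
  by rewrite sig_normal_formE /= (modn_small (ltnW hn)) PH.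
by move=> [[|[|u]] u_lt] //= _; rewrite sig_normal_formE //= modn_small.
Qed.
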